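(* Fix constants $\lambda_1,\ldots,\lambda_K\ge 0$ and $\mu_1,\ldots,\mu_M\ge 0$, and for a channel realization $\boldsymbol{\alpha}$ consider the problem $$\max_{p_1,\ldots,p_K\ge 0}\ \log\Big(1+\sum_{k=1}^K h_kp_k\Big)-\sum_{k=1}^K\lambda_kp_k-\sum_{m=1}^M\mu_m\sum_{k=1}^K g_{km}p_k .$$ For almost every realization $\boldsymbol{\alpha}$ the following holds: if $(p_1^*,\ldots,p_K^* )$ is an optimal solution with $p_i^*>0$ for some user $i$ and $p_j^*=0$ for every $j\neq i$, then $$\frac{h_i}{\lambda_i+\sum_{m=1}^M\mu_m g_{im}}\ \ge\ \frac{h_j}{\lambda_j+\sum_{m=1}^M\mu_m g_{jm}}\quad\forall j\neq i,$$ and $$p_i^*=\Big(\frac{1}{\lambda_i+\sum_{m=1}^M\mu_m g_{im}}-\frac{1}{h_i}\Big)^+ .$$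
   Context: $\boldsymbol{\alpha}=(h_1,\ldots,h_K,g_{11},\ldots,g_{KM})$ is a random vector of nonnegative channel power gains ($h_k$: secondary user $k$ to secondary base station; $g_{km}$: secondary user $k$ to primary receiver $m$) with a continuous, differentiable joint cumulative distribution function, the $h_k$'s and $g_{km}$'s being independent. $(x)^+=\max(0,x)$. *)

From HB Require Import structures.
From mathcomp Require Import all_boot all_order all_algebra.
From mathcomp Require Import all_classical all_reals all_analysis.
Set Implicit Arguments. Unset Strict Implicit. Unset Printing Implicit Defensive.
Import Order.TTheory GRing.Theory Num.Theory.
Import numFieldNormedType.Exports.
Local Open Scope classical_set_scope.
Local Open Scope ring_scope.

(* The channel vector alpha = (h_1..h_K, g_11..g_KM) is a row vector of
   length K + K*M; the first K entries are the h_k, the rest the g_km. *)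
Definition hidx (K M : nat) (k : 'I_K) : 'I_(K + K * M) := lshift (K * M) k.
Definition gidx (K M : nat) (k : 'I_K) (m : 'I_M) : 'I_(K + K * M) :=
  rshift K (mxvec_index k m).

Definition hval {R : realType} (K M : nat) (a : 'rV[R]_(K + K * M)) (k : 'I_K) : R :=
  a ord0 (hidx M k).
Definition gval {R : realType} (K M : nat) (a : 'rV[R]_(K + K * M))
  (k : 'I_K) (m : 'I_M) : R := a ord0 (gidx k m).

Definition joint_cdf {R : realType} {d} {T : measurableType d} (n : nat)
  (P : probability T R) (X : T -> 'rV[R]_n) (x : 'rV[R]_n) : R :=
  fine (P [set w | forall j : 'I_n, X w ord0 j <= x ord0 j]).

Definition indep_components {R : realType} {d} {T : measurableType d} (n : nat)
  (P : probability T R) (X : T -> 'rV[R]_n) : Prop :=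
  forall B : 'I_n -> set R, (forall j, measurable (B j)) ->
    P (\bigcap_(j in [set: 'I_n]) [set w | B j (X w ord0 j)])
    = (\prod_(j < n) P [set w | B j (X w ord0 j)])%E.

Definition objective {R : realType} (K M : nat) (lam : 'I_K -> R) (mu : 'I_M -> R)
  (h : 'I_K -> R) (g : 'I_K -> 'I_M -> R) (p : 'I_K -> R) : R :=
  ln (1 + \sum_(k < K) h k * p k) - \sum_(k < K) lam k * p k
  - \sum_(m < M) mu m * \sum_(k < K) g k m * p k.

Definition is_optimal {R : realType} (K M : nat) (lam : 'I_K -> R) (mu : 'I_M -> R)
  (h : 'I_K -> R) (g : 'I_K -> 'I_M -> R) (p : 'I_K -> R) : Prop :=
  (forall k, 0 <= p k) /\
  forall q : 'I_K -> R, (forall k, 0 <= q k) ->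
    objective lam mu h g q <= objective lam mu h g p.

Definition wcost {R : realType} (K M : nat) (lam : 'I_K -> R) (mu : 'I_M -> R)
  (g : 'I_K -> 'I_M -> R) (k : 'I_K) : R :=
  lam k + \sum_(m < M) mu m * g k m.

From HB Require Import structures.
From mathcomp Require Import all_boot all_order all_algebra.
From mathcomp Require Import all_classical all_reals all_analysis.
From mathcomp Require Import lra.
Set Implicit Arguments. Unset Strict Implicit.
Import Order.TTheory GRing.Theory Num.Theory.
Import numFieldNormedType.Exports.
Local Open Scope classical_set_scope.
Local Open Scope ring_scope.

(* Writing c_k = lam_k + sum_m mu_m g_km and u = 1 + sum_k h_k p_k, the
   objective is ln u - sum_k c_k p_k.  Perturbing an optimal p along one
   coordinate and using the concavity bound ln v - ln u >= (v - u) / v gives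
   the first-order conditions h_j <= c_j u for all j, with equality when
   p_j > 0.  Hence an active user i has h_i / c_i = u >= h_j / c_j, and if i is
   the only active user then u = 1 + h_i p_i, i.e. p_i = 1/c_i - 1/h_i.  This
   needs h_i > 0, which holds almost surely because a continuous cdf of a
   nonnegative random vector vanishes wherever a coordinate is 0. *)

Lemma ln_sub_ge (R : realType) (u v : R) : 0 < u -> 0 < v -> (v - u) / v <= ln v - ln u.
Proof.
move=> u_gt0 v_gt0.
have uv_gt0 : 0 < u / v by exact: divr_gt0.
have : -1 < u / v - 1 by lra.
move=> /le_ln1Dx; rewrite addrCA subrr addr0.
rewrite lnM ?posrE ?invr_gt0 // lnV ?posrE // mulrBl divff ?gt_eqF //.
lra.
Qed.

Lemma ler_of_forall_small_addr (R : realFieldType) (a b k d : R) : 0 <= k -> 0 < d ->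
  (forall s, 0 < s -> s <= d -> a <= b + k * s) -> a <= b.
Proof.
move=> k_ge0 d_gt0 small; apply/ler_addgt0Pr => e e_gt0.
have e'_gt0 : 0 < e / (k + 1) by rewrite divr_gt0 //; lra.
have ke' : k * (e / (k + 1)) <= e.
  by rewrite mulrA ler_pdivrMr ?ler_pM2l //; lra.
set s := Num.min d (e / (k + 1)).
have s_gt0 : 0 < s by rewrite lt_min d_gt0.
have s_le_d : s <= d by rewrite ge_min lexx.
have : s <= e / (k + 1) by rewrite ge_min lexx orbT.
have := small s s_gt0 s_le_d; nra.
Qed.

Lemma sum_mul_shift_coord (R : pzRingType) (K : nat) (f q : 'I_K -> R)
    (j : 'I_K) (s : R) :
  \sum_(k < K) f k * (q k + (k == j)%:R * s) = \sum_(k < K) f k * q k + f j * s.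
Proof.
under eq_bigr do rewrite mulrDr.
rewrite big_split /=; congr (_ + _).
rewrite (bigD1 j) //= eqxx mul1r big1 ?addr0 // => k /negbTE ->.
by rewrite mul0r mulr0.
Qed.

Section FirstOrderConditions.
Variables (R : realType) (K M : nat) (lam : 'I_K -> R) (mu : 'I_M -> R)
  (h : 'I_K -> R) (g : 'I_K -> 'I_M -> R).
Local Notation c := (wcost lam mu g).

Lemma objectiveE (q : 'I_K -> R) :
  objective lam mu h g q = ln (1 + \sum_(k < K) h k * q k) - \sum_(k < K) c k * q k.
Proof.
rewrite /objective /wcost -addrA -opprD; congr (_ - _).
under [X in _ + X = _]eq_bigr do rewrite big_distrr /=.
rewrite exchange_big -big_split /=; apply: eq_bigr => k _.
by rewrite mulrDl big_distrl /=; under eq_bigr do rewrite mulrA.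
Qed.

Hypotheses (lam_ge0 : forall k, 0 <= lam k) (mu_ge0 : forall m, 0 <= mu m)
  (h_ge0 : forall k, 0 <= h k) (g_ge0 : forall k m, 0 <= g k m).

Lemma wcost_ge0 k : 0 <= c k.
Proof. by rewrite addr_ge0 // sumr_ge0 // => m _; rewrite mulr_ge0. Qed.

Variable p : 'I_K -> R.
Hypothesis p_opt : is_optimal lam mu h g p.
Let u := 1 + \sum_(k < K) h k * p k.

Let u_ge1 : 1 <= u.
Proof. by rewrite lerDl sumr_ge0 // => k _; rewrite mulr_ge0 ?p_opt.1. Qed.

Let u_gt0 : 0 < u := lt_le_trans ltr01 u_ge1.

Lemma optimal_coord_perturb (j : 'I_K) (s : R) : 0 <= p j + s ->
  h j * s <= c j * s * (u + h j * s).
Proof.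
move=> pjs_ge0; have [p_ge0 p_max] := p_opt.
pose q k := p k + (k == j)%:R * s.
have q_ge0 k : 0 <= q k.
  by rewrite /q; case: eqVneq => [->|_]; rewrite ?mul1r ?mul0r ?addr0.
have v_ge1 : 1 <= u + h j * s.
  rewrite /u -addrA -sum_mul_shift_coord lerDl.
  by apply: sumr_ge0 => k _; exact: mulr_ge0 (h_ge0 k) (q_ge0 k).
have := p_max q q_ge0; rewrite !objectiveE /q !sum_mul_shift_coord addrA -/u.
set C := \sum_(k < K) c k * p k => opt_q.
have v_gt0 : 0 < u + h j * s := lt_le_trans ltr01 v_ge1.
have := ln_sub_ge u_gt0 v_gt0.
have ln_gap : ln (u + h j * s) - ln u <= c j * s by lra.
rewrite addrAC subrr add0r ler_pdivrMr // => /le_trans; apply.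
by rewrite ler_pM2r.
Qed.

Lemma optimal_gain_le_cost (j : 'I_K) : h j <= c j * u.
Proof.
apply: (@ler_of_forall_small_addr _ _ _ (c j * h j) 1) => //.
  by rewrite mulr_ge0 ?wcost_ge0.
move=> s s_gt0 _.
have pjs_ge0 : 0 <= p j + s by have := p_opt.1 j; lra.
have := optimal_coord_perturb pjs_ge0; have := wcost_ge0 j; nra.
Qed.

Lemma optimal_cost_le_gain (j : 'I_K) : 0 < p j -> c j * u <= h j.
Proof.
move=> pj_gt0.
apply: (@ler_of_forall_small_addr _ _ _ (c j * h j) (p j)) => //.
  by rewrite mulr_ge0 ?wcost_ge0.
move=> r r_gt0 r_le.
have pjr_ge0 : 0 <= p j + - r by lra.
have := optimal_coord_perturb pjr_ge0; have := wcost_ge0 j; nra.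
Qed.

Variable i : 'I_K.
Hypotheses (hi_gt0 : 0 < h i) (pi_gt0 : 0 < p i).

Let cost_mul_u : c i * u = h i.
Proof.
by apply/eqP; rewrite eq_le optimal_gain_le_cost optimal_cost_le_gain.
Qed.

Let cost_gt0 : 0 < c i.
Proof. by rewrite -(pmulr_lgt0 _ u_gt0) cost_mul_u. Qed.

Let ratio_eq : h i / c i = u.
Proof. by rewrite -cost_mul_u mulrAC divff ?mul1r // gt_eqF. Qed.

Lemma optimal_active_ratio_max j : h j / c j <= h i / c i.
Proof.
rewrite ratio_eq; have := optimal_gain_le_cost j.
have := wcost_ge0 j; rewrite le_eqVlt => /predU1P[<-|cj_gt0].
  by rewrite invr0 mulr0 => _; exact: ltW.
by rewrite ler_pdivrMr // mulrC.
Qed.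

Hypothesis p_single : forall j, j != i -> p j = 0.

Lemma single_user_power : p i = Num.max ((c i)^-1 - (h i)^-1) 0.
Proof.
have u_single : u = 1 + h i * p i.
  by rewrite /u (bigD1 i) //= big1 ?addr0 // => k /p_single ->; rewrite mulr0.
have -> : (c i)^-1 = u / h i.
  by rewrite -ratio_eq mulrAC divff ?mul1r // gt_eqF.
rewrite u_single mulrDl div1r mulrAC divff ?mul1r ?gt_eqF // addrC addKr.
by rewrite max_l // ltW.
Qed.

End FirstOrderConditions.

Section PositiveComponents.
Variables (R : realType) (d : measure_display) (T : measurableType d)
  (P : probability T R) (n : nat) (X : T -> 'rV[R]_n).
Hypotheses (X_meas : forall j, measurable_fun [set: T] (fun w => X w ord0 j))
  (X_ge0 : forall w j, 0 <= X w ord0 j).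

Lemma measurable_lower_orthant (x : 'rV[R]_n) :
  measurable [set w | forall j, X w ord0 j <= x ord0 j].
Proof.
have -> : [set w | forall j, X w ord0 j <= x ord0 j] =
    \bigcap_(j in [set: 'I_n]) ((fun w => X w ord0 j) @^-1` `]-oo, x ord0 j]).
  apply/seteqP; split=> w /= Xw j; first by rewrite /= in_itv /= Xw.
  by have := Xw j I; rewrite /= in_itv.
apply: fin_bigcap_measurable => [|j _]; first exact: finite_finset.
by rewrite -[X in measurable X]setTI; exact: X_meas.
Qed.

(* Move x off the nonnegative orthant along coordinate j0, where the cdf is 0. *)
Lemma joint_cdf_eq0 (x : 'rV[R]_n) (j0 : 'I_n) :
  continuous_at x (joint_cdf P X) -> x ord0 j0 = 0 -> joint_cdf P X x = 0.
Proof.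
move=> F_cont xj0.
pose y k : 'rV[R]_n := x - harmonic k *: delta_mx ord0 j0.
have y_cvg : y @ \oo --> x.
  rewrite -[x in _ --> x]subr0; apply: cvgB; first exact: cvg_cst.
  rewrite -(scale0r (delta_mx ord0 j0)).
  by apply: cvgZ; [exact: cvg_harmonic|exact: cvg_cst].
have Fy k : joint_cdf P X (y k) = 0.
  rewrite /joint_cdf [X in P X](_ : _ = set0) ?measure0 //.
  apply/seteqP; split => // w /= /(_ j0).
  rewrite /y !mxE xj0 /= eqxx mulr1 add0r => Xw.
  by have := le_trans (X_ge0 w j0) Xw; rewrite oppr_ge0 leNgt invr_gt0 ltr0n.
have := @continuous_cvg _ _ _ _ _ _ _ _ F_cont y_cvg.
rewrite (_ : joint_cdf P X \o y = cst 0); last exact/funext.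
by move=> cvg0; rewrite -(cvg_lim (@Rhausdorff R) (cvg0 _)) lim_cst.
Qed.

Lemma ae_component_gt0 (j0 : 'I_n) :
  (forall x, continuous_at x (joint_cdf P X)) -> {ae P, forall w, 0 < X w ord0 j0}.
Proof.
move=> F_cont.
pose x k : 'rV[R]_n := \row_j (if j == j0 then 0 else k%:R).
pose A k := [set w | forall j, X w ord0 j <= x k ord0 j].
have PA0 k : P (A k) = 0%E.
  have : joint_cdf P X (x k) = 0.
    by apply: (joint_cdf_eq0 (j0 := j0)); rewrite ?mxE ?eqxx.
  rewrite /joint_cdf -/(A k) => F0.
  rewrite -[P (A k)]fineK ?F0 //.
  exact/fin_num_measure/measurable_lower_orthant.
apply: (@negligibleS _ _ _ P (\bigcup_k A k)); last first.
  apply: negligible_bigcup => k; exists (A k).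
  by split; [exact: measurable_lower_orthant|exact: PA0|].
move=> w /= /negP; rewrite -leNgt => Xw_le0.
exists (\sum_(j < n) Num.bound (X w ord0 j))%N => // j.
rewrite /x mxE; case: ifPn => [/eqP -> //|_].
apply: le_trans (ltW (archi_boundP (X_ge0 w j))) _.
by rewrite ler_nat (bigD1 j) //= leq_addr.
Qed.

End PositiveComponents.

Theorem lemma3p2 (R : realType) (d : measure_display) (T : measurableType d)
  (P : probability T R) (K M : nat) (alpha : T -> 'rV[R]_(K + K * M))
  (lam : 'I_K -> R) (mu : 'I_M -> R) :
  (forall k, 0 <= lam k) -> (forall m, 0 <= mu m) ->
  (forall j, measurable_fun [set: T] (fun w => alpha w ord0 j)) ->
  (forall w j, 0 <= alpha w ord0 j) ->
  (forall x, continuous_at x (joint_cdf P alpha)) ->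
  (forall x, differentiable (joint_cdf P alpha) x) ->
  indep_components P alpha ->
  {ae P, forall w,
    let h := hval (alpha w) in
    let g := gval (alpha w) in
    forall (p : 'I_K -> R) (i : 'I_K),
      is_optimal lam mu h g p -> 0 < p i ->
      (forall j, j != i -> p j = 0) ->
      (forall j, j != i ->
         h j / wcost lam mu g j <= h i / wcost lam mu g i) /\
      p i = Num.max ((wcost lam mu g i)^-1 - (h i)^-1) 0}.
Proof.
move=> lam_ge0 mu_ge0 alpha_meas alpha_ge0 F_cont _ _.
have h_gt0 : {ae P, forall w, forall i : 'I_K, 0 < alpha w ord0 (hidx M i)}.
  by apply: filter_forall => i; exact: ae_component_gt0.
apply: filterS h_gt0 => w h_gt0 /= p i p_opt pi_gt0 p_single.
have h_ge0 k : 0 <= hval (alpha w) k by exact: alpha_ge0.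
have g_ge0 k m : 0 <= gval (alpha w) k m by exact: alpha_ge0.
have hi_gt0 : 0 < hval (alpha w) i := h_gt0 i.
split=> [j _|].
  exact (optimal_active_ratio_max lam_ge0 mu_ge0 h_ge0 g_ge0 p_opt hi_gt0 pi_gt0 j).
exact (single_user_power lam_ge0 mu_ge0 h_ge0 g_ge0 p_opt hi_gt0 pi_gt0 p_single).
Qed.
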